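(* Let $m_1,m_2\geq1$, $m=m_1+m_2$, $j=\mathrm{diag}(I_{m_1},-I_{m_2})$, $n\in\mathbb{N}$, and let $\{A,S_0,\Pi_0\}$ be an admissible triple. Define $\Pi_k,S_k$ $(k\geq0)$ by the recursions $\Pi_{k+1}=\Pi_k+\mathrm{i} A^{-1}\Pi_k j$, $S_{k+1}=S_k+A^{-1}S_k(A^* )^{-1}+A^{-1}\Pi_k\Pi_k^*(A^* )^{-1}$. Then all $S_k$ are invertible, so that the matrices $C_k:=I_m+\Pi_k^*S_k^{-1}\Pi_k-\Pi_{k+1}^*S_{k+1}^{-1}\Pi_{k+1}$ are well defined, and they satisfy $C_k>0$ and $C_kjC_k=j$ for all $k\geq 0$. Moreover, the fundamental solution $\{W_k\}$ of the Dirac system $y_{k+1}(z)=(I_m+\mathrm{i} zjC_k)y_k(z)$ admits the representation $$W_k(z)=w_A(k,-1/z)\,(I_m+\mathrm{i} zj)^k\,w_A(0,-1/z)^{-1}\qquad(k\geq0),$$ where $w_A(k,\lambda):=I_m-\mathrm{i} j\Pi_k^*S_k^{-1}(A-\lambda I_n)^{-1}\Pi_k$ (for those $z\neq0$ at which the right-hand side is defined).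
   Context: A triple $\{A,S_0,\Pi_0\}$ is called admissible if $A$ is an invertible $n\times n$ matrix, $S_0$ is a positive definite $n\times n$ matrix, $\Pi_0$ is an $n\times m$ matrix, and $AS_0-S_0A^*=\mathrm{i}\Pi_0j\Pi_0^*$. The fundamental solution is defined by $W_0(z)=I_m$, $W_{k+1}(z)=(I_m+\mathrm{i} zjC_k)W_k(z)$. *)

(* Complex scalars: an arbitrary numClosedFieldType C
   (e.g. complex numbers over a realType); this generalizes C = the complex field. *)
From HB Require Import structures.
From mathcomp Require Import all_boot all_order all_algebra.
Set Implicit Arguments. Unset Strict Implicit. Unset Printing Implicit Defensive.
Import Order.TTheory GRing.Theory Num.Theory.
Local Open Scope ring_scope.

Section Defs.
Variable C : numClosedFieldType.

Definition ctr (p q : nat) (M : 'M[C]_(p, q)) : 'M[C]_(q, p) := (map_mx Num.conj M)^T.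

(* positive definite: v^* M v > 0 for all nonzero v (in a numClosedField,
   0 < x forces x real); for complex matrices this implies M hermitian *)
Definition posdef (p : nat) (M : 'M[C]_p) : Prop :=
  forall v : 'cV[C]_p, v != 0 -> 0 < (ctr v *m M *m v) 0 0.

Definition jmat (m1 m2 : nat) : 'M[C]_(m1 + m2) := block_mx 1%:M 0 0 (- 1%:M).

Definition admissible (n m : nat) (j : 'M[C]_m) (A S0 : 'M[C]_n) (Pi0 : 'M[C]_(n, m)) : Prop :=
  [/\ A \in unitmx, posdef S0 &
      A *m S0 - S0 *m ctr A = 'i *: (Pi0 *m j *m ctr Pi0)].

Variables (n m : nat) (j : 'M[C]_m) (A S0 : 'M[C]_n) (Pi0 : 'M[C]_(n, m)).

Fixpoint Pik (k : nat) : 'M[C]_(n, m) :=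
  match k with
  | 0 => Pi0
  | k'.+1 => Pik k' + 'i *: (invmx A *m Pik k' *m j)
  end.

Fixpoint Sk (k : nat) : 'M[C]_n :=
  match k with
  | 0 => S0
  | k'.+1 => Sk k' + invmx A *m Sk k' *m invmx (ctr A)
             + invmx A *m Pik k' *m ctr (Pik k') *m invmx (ctr A)
  end.

Definition Ck (k : nat) : 'M[C]_m :=
  1%:M + ctr (Pik k) *m invmx (Sk k) *m Pik k
       - ctr (Pik k.+1) *m invmx (Sk k.+1) *m Pik k.+1.

Fixpoint Wk (z : C) (k : nat) : 'M[C]_m :=
  match k with
  | 0 => 1%:M
  | k'.+1 => (1%:M + ('i * z) *: (j *m Ck k')) *m Wk z k'
  end.

Definition wA (k : nat) (lam : C) : 'M[C]_m :=
  1%:M - 'i *: (j *m ctr (Pik k) *m invmx (Sk k) *m invmx (A - lam%:M) *m Pik k).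

End Defs.

From HB Require Import structures.
From mathcomp Require Import all_boot all_order all_algebra.
From mathcomp Require Import ring.
Set Implicit Arguments. Unset Strict Implicit. Unset Printing Implicit Defensive.
Import Order.TTheory GRing.Theory Num.Theory.
Local Open Scope ring_scope.

(* Put T := A S_{k+1} A^* = S_k + A S_k A^* + Pi_k Pi_k^* and
   G := A Pi_{k+1} = A Pi_k + i Pi_k j.  The admissibility identity propagates
   from (S_k, Pi_k) to (T, G), hence to (S_{k+1}, Pi_{k+1}), and S_{k+1} is
   positive definite, so by induction every S_k is.  In these terms
   C_k = I + Pi_k^* S_k^{-1} Pi_k - G^* T^{-1} G, and completing the square
   with u = -T^{-1} G v writes v^* C_k v as a sum of squared norms, one of
   them positive.  The central identity is, for R = (A - lambda)^{-1},
     (lambda - i j C_k) w_A(k, lambda) = w_A(k+1, lambda) (lambda - i j);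
   at lambda = -1/z it is, up to the factor -z, one step of the recursion
   for W_k, which gives the representation by induction.  At lambda = 0 it
   says j C_k w_k = w_{k+1} j for the j-unitary matrices w_k := w_A(k, 0),
   and together with C_k = C_k^* this forces C_k j C_k = j. *)

Section ConjTranspose.
Variable C : numClosedFieldType.
Implicit Types (p q r : nat).

Lemma ctrM p q r (X : 'M[C]_(p, q)) (Y : 'M[C]_(q, r)) : ctr (X *m Y) = ctr Y *m ctr X.
Proof. by rewrite /ctr map_mxM trmx_mul. Qed.

Lemma ctrD p q (X Y : 'M[C]_(p, q)) : ctr (X + Y) = ctr X + ctr Y.
Proof. by rewrite /ctr map_mxD linearD. Qed.

Lemma ctrN p q (X : 'M[C]_(p, q)) : ctr (- X) = - ctr X.
Proof. by rewrite /ctr map_mxN linearN. Qed.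

Lemma ctrB p q (X Y : 'M[C]_(p, q)) : ctr (X - Y) = ctr X - ctr Y.
Proof. by rewrite ctrD ctrN. Qed.

Lemma ctrZ p q a (X : 'M[C]_(p, q)) : ctr (a *: X) = a^* *: ctr X.
Proof. by rewrite /ctr map_mxZ linearZ. Qed.

Lemma ctrK p q (X : 'M[C]_(p, q)) : ctr (ctr X) = X.
Proof. by apply/matrixP=> i k; rewrite !mxE conjCK. Qed.

Lemma ctr1 p : ctr (1%:M : 'M[C]_p) = 1%:M.
Proof. by rewrite /ctr map_mx1 trmx1. Qed.

Lemma ctr0 p q : ctr (0 : 'M[C]_(p, q)) = 0.
Proof. by rewrite /ctr map_mx0 trmx0. Qed.

Lemma ctrV p (X : 'M[C]_p) : ctr (invmx X) = invmx (ctr X).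
Proof. by rewrite /ctr map_invmx trmx_inv. Qed.

Lemma unitmx_ctr p (X : 'M[C]_p) : (ctr X \in unitmx) = (X \in unitmx).
Proof. by rewrite /ctr unitmx_tr map_unitmx. Qed.

Lemma conjCN (x : C) : (- x)^* = - x^*. Proof. exact: rmorphN. Qed.

Lemma conjCM (x y : C) : (x * y)^* = x^* * y^*. Proof. exact: rmorphM. Qed.

End ConjTranspose.

Section PositiveDefinite.
Variable C : numClosedFieldType.
Implicit Types (p : nat).

Lemma ctr_mulmx_ge0 p (u : 'cV[C]_p) : 0 <= (ctr u *m u) 0 0.
Proof.
rewrite mxE; apply: sumr_ge0 => i _; rewrite !mxE -normCKC.
exact: exprn_ge0.
Qed.

Lemma ctr_mulmx_gt0 p (u : 'cV[C]_p) : u != 0 -> 0 < (ctr u *m u) 0 0.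
Proof.
move=> u0.
have [i ui] : exists i, u i 0 != 0.
  apply/existsP; apply: contraR u0; rewrite negb_exists => /forallP u0.
  by apply/eqP/matrixP => a b; rewrite (ord1 b) mxE; exact/eqP/negPn/u0.
rewrite mxE (bigD1 i) //= !mxE -normCKC; apply: ltr_pwDl.
  by rewrite exprn_gt0 // normr_gt0.
by apply: sumr_ge0 => k _; rewrite !mxE -normCKC exprn_ge0.
Qed.

Lemma posdef_form_ge0 p (M : 'M[C]_p) :
  posdef M -> forall v : 'cV[C]_p, 0 <= (ctr v *m M *m v) 0 0.
Proof.
move=> pdM v; have [->|v0] := eqVneq v 0; first by rewrite mulmx0 mxE.
exact/ltW/pdM.
Qed.

Lemma posdef_unitmx p (M : 'M[C]_p) : posdef M -> M \in unitmx.
Proof.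
move=> pdM; rewrite unitmxE unitfE -det_tr; apply/negP => /det0P [v v0 vM].
have Mv : M *m v^T = 0 by rewrite -[M]trmxK -trmx_mul vM trmx0.
have := pdM v^T; rewrite trmx_eq0 v0 -mulmxA Mv mulmx0 mxE => /(_ isT).
by rewrite ltxx.
Qed.

Lemma posdef_congr p (M B : 'M[C]_p) :
  posdef M -> B \in unitmx -> posdef (B *m M *m ctr B).
Proof.
move=> pdM uB v v0; have uBc : ctr B \in unitmx by rewrite unitmx_ctr.
rewrite -!mulmxA mulmxA -[ctr v *m B]ctrK ctrM ctrK mulmxA; apply: pdM.
by apply: contra v0 => /eqP Bv0; rewrite -(mulKmx uBc v) Bv0 mulmx0.
Qed.

(* Polarisation: the values on u + w and u + i w recover the sesquilinear form. *)
Lemma quad_form_eq0 p (H : 'M[C]_p) :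
  (forall v : 'cV[C]_p, ctr v *m H *m v = 0) -> H = 0.
Proof.
move=> q0.
have pol (u w : 'cV[C]_p) : ctr u *m H *m w = 0.
  have e1 := q0 (u + w); have e2 := q0 (u + 'i *: w).
  rewrite !ctrD !mulmxDl !mulmxDr !q0 add0r addr0 in e1.
  rewrite !ctrD !ctrZ !mulmxDl !mulmxDr -!scalemxAl -!scalemxAr !q0 in e2.
  rewrite ?scaler0 ?add0r ?addr0 conjCi scaleNr in e2.
  have /eqP : 'i *: (ctr u *m H *m w - ctr w *m H *m u) = 0 by rewrite scalerBr.
  rewrite scaler_eq0 (negPf (neq0Ci _)) /= subr_eq0 => /eqP e3.
  move/eqP: e1; rewrite e3 -mulr2n -scaler_nat scaler_eq0 pnatr_eq0 /=.
  by move/eqP.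
apply/matrixP => a b; have := pol (delta_mx a 0) (delta_mx b 0).
have -> : ctr (delta_mx a 0 : 'cV[C]_p) = delta_mx 0 a.
  by apply/matrixP => x y; rewrite !mxE rmorph_nat andbC.
by rewrite -rowE -colE => /matrixP/(_ 0 0); rewrite !mxE.
Qed.

Lemma posdef_herm p (M : 'M[C]_p) : posdef M -> ctr M = M.
Proof.
move=> pdM; apply/eqP; rewrite eq_sym -subr_eq0; apply/eqP/quad_form_eq0 => v.
set x := ctr v *m M *m v.
have xr : (x 0 0)^* = x 0 0.
  have [v0|v0] := eqVneq v 0; first by rewrite /x v0 mulmx0 mxE conjC0.
  exact/conj_Creal/gtr0_real/pdM.
have -> : ctr v *m (M - ctr M) *m v = x - ctr x.
  by rewrite mulmxBr mulmxBl /x !ctrM ctrK !mulmxA.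
apply/eqP; rewrite subr_eq0; apply/eqP/matrixP => a b.
by rewrite (ord1 a) (ord1 b) [in RHS]mxE [in RHS]mxE xr.
Qed.

End PositiveDefinite.

Section MatrixRing.
Variable C : numClosedFieldType.

Lemma mxED p q (X Y : 'M[C]_(p, q)) a b : (X + Y) a b = X a b + Y a b.
Proof. by rewrite mxE. Qed.

Lemma mxEN p q (X : 'M[C]_(p, q)) a b : (- X) a b = - X a b.
Proof. by rewrite mxE. Qed.

Lemma mxEZ p q c (X : 'M[C]_(p, q)) a b : (c *: X) a b = c * X a b.
Proof. by rewrite mxE. Qed.

Lemma mxE0 p q a b : (0 : 'M[C]_(p, q)) a b = 0.
Proof. by rewrite mxE. Qed.

End MatrixRing.

Ltac ctr_simpl := repeat progress rewrite ?ctrM ?ctrD ?ctrB ?ctrN ?ctrZ ?ctrK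
  ?ctr1 ?ctr0 ?ctrV ?conjCN ?conjCM ?conjCi ?opprK.

Ltac mx_expand := repeat progress rewrite ?mulmxDl ?mulmxDr ?mulmxBl ?mulmxBr
  ?mulmxN ?mulNmx ?mul0mx ?mulmx0 ?mulmx1 ?mul1mx ?mul_scalar_mx ?mul_mx_scalar
  -?scalemxAl -?scalemxAr ?mulmxA ?scalerDr ?scalerBr ?scalerA ?scaleNr ?scalerN
  ?mulNr ?mulrN ?mulCii ?opprK ?scaleN1r ?scale1r ?scaler0 ?scale0r.

(* Once [mx_expand] has left-associated every product, the entries of the
   remaining matrix monomials are independent atoms for [ring]. *)
Ltac mx_ring := apply/matrixP => ? ?;
  repeat progress rewrite ?mxED ?mxEN ?mxEZ ?mxE0 ?mulrDr ?mulrBr ?mulrN ?mulrA ?mulCii;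
  match goal with K : numClosedFieldType |- _ => ring: (mulCii K) end.

Lemma mulmx_invol (C : numClosedFieldType) m p (j : 'M[C]_m) (X : 'M[C]_(p, m)) :
  j *m j = 1%:M -> X *m j *m j = X.
Proof. by move=> hj; rewrite -mulmxA hj mulmx1. Qed.

Lemma jCj_intertwine (C : numClosedFieldType) m (j Cm w0 w1 : 'M[C]_m) :
  j *m j = 1%:M -> ctr j = j -> ctr Cm = Cm -> j *m Cm *m w0 = w1 *m j ->
  w0 *m j *m ctr w0 = j -> w1 *m j *m ctr w1 = j -> Cm *m j *m Cm = j.
Proof.
move=> hj hjc hC hjCw hw0 hw1.
(* w j w^* = j makes j w^* j the inverse of w, whence Cm = j w1 w0^* j. *)
have w0K : w0 *m (j *m ctr w0 *m j) = 1%:M by rewrite !mulmxA hw0 hj.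
have w1K : w1 *m (j *m ctr w1 *m j) = 1%:M by rewrite !mulmxA hw1 hj.
have hw1' : ctr w1 *m j *m w1 = j.
  transitivity (j *m ((j *m ctr w1 *m j) *m w1)); first by rewrite !mulmxA hj mul1mx.
  by rewrite (mulmx1C w1K) mulmx1.
have eC : Cm = j *m w1 *m ctr w0 *m j.
  transitivity (Cm *m (w0 *m (j *m ctr w0 *m j))); first by rewrite w0K mulmx1.
  transitivity (j *m (j *m Cm *m w0) *m j *m ctr w0 *m j).
    by rewrite !mulmxA hj mul1mx.
  by rewrite hjCw !mulmxA (mulmx_invol _ hj).
have w1jK p (Y : 'M[C]_(p, m)) : Y *m ctr w1 *m j *m w1 = Y *m j.
  by rewrite -!mulmxA [ctr w1 *m (j *m w1)]mulmxA hw1'.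
have w0jK p (Y : 'M[C]_(p, m)) : Y *m w0 *m j *m ctr w0 = Y *m j.
  by rewrite -!mulmxA [w0 *m (j *m ctr w0)]mulmxA hw0.
by rewrite -{1}hC eC !ctrM ctrK hjc !mulmxA (mulmx_invol _ hj) w1jK w0jK hj mul1mx.
Qed.

Section Admissible.
Variables (C : numClosedFieldType) (n m : nat) (j : 'M[C]_m) (A S : 'M[C]_n).
Variable P : 'M[C]_(n, m).
Hypotheses (hjc : ctr j = j) (hA : A \in unitmx) (hS : S \in unitmx) (hSh : ctr S = S).
Hypothesis hadm : A *m S - S *m ctr A = 'i *: (P *m j *m ctr P).

Let hAc : ctr A \in unitmx := ltac:(by rewrite unitmx_ctr).

Lemma Pj_ctrP : P *m j *m ctr P = 'i *: (S *m ctr A) - 'i *: (A *m S).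
Proof.
have -> : P *m j *m ctr P = - 'i *: ('i *: (P *m j *m ctr P)).
  by rewrite scalerA mulNr mulCii opprK scale1r.
by rewrite -hadm scalerBr !scaleNr opprK addrC.
Qed.

Lemma mulmx_Pj_ctrP p (Y : 'M[C]_(p, n)) :
  Y *m P *m j *m ctr P = 'i *: (Y *m S *m ctr A) - 'i *: (Y *m A *m S).
Proof.
have -> : Y *m P *m j *m ctr P = Y *m (P *m j *m ctr P) by rewrite !mulmxA.
by rewrite Pj_ctrP mulmxBr -!scalemxAr !mulmxA.
Qed.

Lemma wA0_junitary :
  (1%:M - 'i *: (j *m ctr P *m invmx S *m invmx A *m P)) *m j
    *m ctr (1%:M - 'i *: (j *m ctr P *m invmx S *m invmx A *m P)) = j.
Proof.
ctr_simpl; rewrite ?hjc ?hSh; mx_expand; rewrite ?mulmx_Pj_ctrP; mx_expand.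
rewrite ?(mulmxKV hA) ?(mulmxKV hS) ?(mulmxK hAc) ?(mulmxK hS).
by mx_expand; mx_ring.
Qed.

End Admissible.

Section Step.
Variables (C : numClosedFieldType) (n m : nat) (j : 'M[C]_m) (A S : 'M[C]_n).
Variable P : 'M[C]_(n, m).
Hypotheses (hj : j *m j = 1%:M) (hjc : ctr j = j) (hA : A \in unitmx) (hSpd : posdef S).
Hypothesis hadm : A *m S - S *m ctr A = 'i *: (P *m j *m ctr P).

Let hS : S \in unitmx := posdef_unitmx hSpd.
Let hSh : ctr S = S := posdef_herm hSpd.
Let hAc : ctr A \in unitmx := ltac:(by rewrite unitmx_ctr).

(* T = A S_{k+1} A^* and G = A Pi_{k+1}, see [Sk_succE] and [Pik_succE]. *)
Local Notation T := (S + A *m S *m ctr A + P *m ctr P).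
Local Notation G := (A *m P + 'i *: (P *m j)).
Local Notation S' := (S + invmx A *m S *m invmx (ctr A)
                        + invmx A *m P *m ctr P *m invmx (ctr A)).
Local Notation Q := (P + 'i *: (invmx A *m P *m j)).

Lemma step_admissible : A *m T - T *m ctr A = 'i *: (G *m j *m ctr G).
Proof.
pose D := A *m S - S *m ctr A - 'i *: (P *m j *m ctr P).
have D0 : D = 0 by rewrite /D hadm subrr.
have eD : A *m T - T *m ctr A - 'i *: (G *m j *m ctr G) = D + A *m D *m ctr A.
  by rewrite /D; ctr_simpl; rewrite ?hjc; mx_expand; rewrite ?(mulmx_invol _ hj); mx_ring.
by apply/eqP; rewrite -subr_eq0 eD D0 mulmx0 mul0mx addr0.
Qed.

Lemma step_herm : ctr T = T.
Proof. by ctr_simpl; rewrite hSh !mulmxA. Qed.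

Lemma step_posdef : posdef T.
Proof.
move=> v v0.
have -> : ctr v *m T *m v = ctr v *m S *m v
    + ctr (ctr A *m v) *m S *m (ctr A *m v) + ctr (ctr P *m v) *m (ctr P *m v).
  by ctr_simpl; mx_expand; mx_ring.
rewrite !mxED; apply: ltr_wpDr; first exact: ctr_mulmx_ge0.
by apply: ltr_wpDr; [exact: posdef_form_ge0 | exact: hSpd].
Qed.

Let hT : T \in unitmx := posdef_unitmx step_posdef.

Lemma step_form (u : 'cV[C]_n) (v : 'cV[C]_m) :
  ctr u *m T *m u + ctr u *m G *m v + ctr v *m ctr G *m u
    + ctr v *m (1%:M + ctr P *m invmx S *m P) *m v
  = ctr (ctr A *m u + invmx S *m P *m v) *m S *m (ctr A *m u + invmx S *m P *m v)
    + ctr (ctr P *m u + 'i *: (j *m v)) *m (ctr P *m u + 'i *: (j *m v))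
    + ctr u *m S *m u.
Proof.
ctr_simpl; rewrite ?hjc ?hSh; mx_expand.
by rewrite ?(mulmx_invol _ hj) ?(mulmxK hS) ?(mulmxKV hS); mx_expand; mx_ring.
Qed.

Section StepMatrix.
Variable Ti : 'M[C]_n.
Hypotheses (hTiT : Ti *m T = 1%:M) (hTTi : T *m Ti = 1%:M) (hTih : ctr Ti = Ti).
Local Notation Cm := (1%:M + ctr P *m invmx S *m P - ctr G *m Ti *m G).

Lemma Cm_herm : ctr Cm = Cm.
Proof. by ctr_simpl; rewrite ?hTih ?hSh ?hjc; mx_expand; mx_ring. Qed.

(* Completing the square in [step_form]: the minimising u is -T^{-1} G v. *)
Lemma Cm_posdef : posdef Cm.
Proof.
move=> v v0; set u := - (Ti *m G *m v).
have Tu : T *m u = - (G *m v) by rewrite /u mulmxN !mulmxA hTTi mul1mx.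
have -> : ctr v *m Cm *m v = ctr u *m T *m u + ctr u *m G *m v
    + ctr v *m ctr G *m u + ctr v *m (1%:M + ctr P *m invmx S *m P) *m v.
  rewrite (_ : ctr u *m T *m u = - (ctr u *m G *m v)).
    by rewrite addNr add0r /u; ctr_simpl; rewrite ?hTih; mx_expand; mx_ring.
  by rewrite -mulmxA Tu mulmxN mulmxA.
rewrite step_form !mxED.
have [u0|u0] := eqVneq u 0; last first.
  apply: ltr_pwDr; first exact: hSpd.
  by rewrite addr_ge0 ?ctr_mulmx_ge0 ?posdef_form_ge0.
rewrite u0 mulmx0 add0r; apply: ltr_wpDr; first exact: posdef_form_ge0.
apply: ltr_wpDl; first exact: posdef_form_ge0.
apply: ctr_mulmx_gt0; rewrite mulmx0 add0r scaler_eq0 negb_or neq0Ci /=.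
apply: contra v0 => /eqP jv; apply/eqP.
by rewrite -[v]mul1mx -hj -mulmxA jv mulmx0.
Qed.

Section Resolvent.
Variable R : 'M[C]_n.
Hypothesis hRA : R *m A = A *m R.

Lemma resolvent_G :
  'i *: (A *m R *m G) + G *m j *m ctr P *m invmx S *m R *m P + R *m G *m j
    = 'i *: (T *m invmx S *m R *m P).
Proof.
have RA p (Y : 'M[C]_(p, n)) : Y *m R *m A = Y *m A *m R by rewrite -mulmxA hRA mulmxA.
mx_expand; rewrite ?(mulmx_invol _ hj) ?(mulmx_Pj_ctrP hadm) ?(Pj_ctrP hadm) ?hRA ?RA; mx_expand.
rewrite ?(mulmxK hS) ?(mulmxKV hS) ?mulmxV ?mulVmx //.
by mx_expand; mx_ring.
Qed.

Lemma resolvent_P :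
  - 'i *: (A *m R *m P) - P *m j *m ctr P *m invmx S *m R *m P
    = - 'i *: (S *m ctr A *m invmx S *m R *m P).
Proof.
rewrite (Pj_ctrP hadm); mx_expand; rewrite ?(mulmxK hS) ?(mulmxKV hS).
by mx_expand; mx_ring.
Qed.

Lemma resolvent_Cm :
  'i *: (ctr G *m Ti *m A *m R *m G) - 'i *: (ctr P *m invmx S *m A *m R *m P)
    - Cm *m j *m ctr P *m invmx S *m R *m P + ctr G *m Ti *m R *m G *m j = 0.
Proof.
have TiTK p (Y : 'M[C]_(p, n)) : Y *m Ti *m T = Y by rewrite -mulmxA hTiT mulmx1.
transitivity (ctr G *m Ti *m ('i *: (A *m R *m G)
      + G *m j *m ctr P *m invmx S *m R *m P + R *m G *m j)
  + ctr P *m invmx S *m (- 'i *: (A *m R *m P) - P *m j *m ctr P *m invmx S *m R *m P)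
  - j *m ctr P *m invmx S *m R *m P).
  by ctr_simpl; rewrite ?hjc ?hTih ?hSh; mx_expand; mx_ring.
rewrite resolvent_G resolvent_P -!scalemxAr !mulmxA TiTK (mulmxKV hS).
ctr_simpl; rewrite ?hjc ?hTih ?hSh; mx_expand; rewrite ?(mulmx_invol _ hj) ?hj.
by mx_expand; mx_ring.
Qed.

Variable lam : C.
Hypothesis hAR : A *m R = 1%:M + lam *: R.

Lemma Cm_intertwine :
  (lam%:M - 'i *: (j *m Cm)) *m (1%:M - 'i *: (j *m ctr P *m invmx S *m R *m P))
  = (1%:M - 'i *: (j *m ctr G *m Ti *m R *m G)) *m (lam%:M - 'i *: j).
Proof.
have AR p (Y : 'M[C]_(p, n)) : Y *m A *m R = Y + lam *: (Y *m R).
  by rewrite -mulmxA hAR mulmxDr mulmx1 -scalemxAr.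
apply/eqP; rewrite -subr_eq0; apply/eqP.
transitivity (j *m ('i *: (ctr G *m Ti *m A *m R *m G)
    - 'i *: (ctr P *m invmx S *m A *m R *m P)
    - Cm *m j *m ctr P *m invmx S *m R *m P + ctr G *m Ti *m R *m G *m j)).
  ctr_simpl; rewrite ?hjc ?hTih ?hSh; mx_expand; rewrite ?AR ?hAR; mx_expand.
  by rewrite ?(mulmx_invol _ hj) ?hj; mx_expand; mx_ring.
by rewrite resolvent_Cm mulmx0.
Qed.

End Resolvent.

Lemma Cm_intertwine0 :
  j *m Cm *m (1%:M - 'i *: (j *m ctr P *m invmx S *m invmx A *m P))
  = (1%:M - 'i *: (j *m ctr G *m Ti *m invmx A *m G)) *m j.
Proof.
have hRA : invmx A *m A = A *m invmx A by rewrite mulVmx ?mulmxV.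
have hAR : A *m invmx A = 1%:M + 0 *: invmx A by rewrite mulmxV // scale0r addr0.
have := Cm_intertwine hRA hAR.
have -> : 0%:M = 0 :> 'M[C]_m by apply/matrixP => a b; rewrite !mxE mul0rn.
rewrite !sub0r mulNmx mulmxN -!scalemxAl -scalemxAr.
by move/oppr_inj/(scalerI (neq0Ci C)).
Qed.

End StepMatrix.

Lemma Sk_succE : S' = invmx A *m T *m invmx (ctr A).
Proof. by mx_expand; rewrite (mulVmx hA) mul1mx (mulmxK hAc); mx_ring. Qed.

Lemma Pik_succE : Q = invmx A *m G.
Proof. by rewrite mulmxDr mulmxA (mulVmx hA) mul1mx -scalemxAr mulmxA. Qed.

Lemma Sk_succ_posdef : posdef S'.
Proof.
rewrite Sk_succE -ctrV; apply: posdef_congr; first exact: step_posdef.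
by rewrite unitmx_inv.
Qed.

Lemma Sk_succ_admissible : A *m S' - S' *m ctr A = 'i *: (Q *m j *m ctr Q).
Proof.
rewrite Sk_succE Pik_succE.
transitivity (invmx A *m (A *m T - T *m ctr A) *m invmx (ctr A)).
  do 3 (mx_expand; rewrite ?(mulmxV hA) ?(mulVmx hA) ?(mulmxKV hAc) ?(mulmxK hAc)).
  by mx_expand; mx_ring.
by rewrite step_admissible; ctr_simpl; rewrite ?hjc; mx_expand; mx_ring.
Qed.

Lemma invSk_succE : invmx S' = ctr A *m invmx T *m A.
Proof.
have uS' : S' \in unitmx := posdef_unitmx Sk_succ_posdef.
have S'K : S' *m (ctr A *m invmx T *m A) = 1%:M.
  by rewrite Sk_succE !mulmxA (mulmxKV hAc) (mulmxK hT) (mulVmx hA).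
by rewrite -[RHS](mulKmx uS') S'K mulmx1.
Qed.

Lemma resolvent_form_succE (R : 'M[C]_n) : R *m A = A *m R ->
  ctr Q *m invmx S' *m R *m Q = ctr G *m invmx T *m R *m G.
Proof.
move=> hRA; have AR p (Y : 'M[C]_(p, n)) : Y *m A *m R = Y *m R *m A.
  by rewrite -!mulmxA hRA.
by rewrite Pik_succE invSk_succE !ctrM ctrV !mulmxA (mulmxKV hAc) AR (mulmxK hA).
Qed.

Lemma form_succE : ctr Q *m invmx S' *m Q = ctr G *m invmx T *m G.
Proof. by rewrite Pik_succE invSk_succE !ctrM ctrV !mulmxA (mulmxKV hAc) (mulmxK hA). Qed.

Local Notation Ck_step := (1%:M + ctr P *m invmx S *m P - ctr Q *m invmx S' *m Q).

Let hTiT : invmx T *m T = 1%:M := mulVmx hT.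
Let hTih : ctr (invmx T) = invmx T := ltac:(by rewrite ctrV step_herm).

Lemma Ck_step_posdef_jCj : posdef Ck_step /\ Ck_step *m j *m Ck_step = j.
Proof.
rewrite form_succE; split; first exact: Cm_posdef (mulmxV hT).
apply: (jCj_intertwine hj hjc (Cm_herm hTih) (Cm_intertwine0 hTiT)).
  exact: wA0_junitary hjc hA hS hSh hadm.
exact: wA0_junitary hjc hA hT step_herm step_admissible.
Qed.

Lemma Ck_step_intertwine (z : C) : z != 0 -> (A - (- z^-1)%:M) \in unitmx ->
  (1%:M + ('i * z) *: (j *m Ck_step))
    *m (1%:M - 'i *: (j *m ctr P *m invmx S *m invmx (A - (- z^-1)%:M) *m P))
  = (1%:M - 'i *: (j *m ctr Q *m invmx S' *m invmx (A - (- z^-1)%:M) *m Q))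
    *m (1%:M + ('i * z) *: j).
Proof.
move=> z0 uR; set lam := - z^-1; set R := invmx (A - lam%:M).
have hAR : A *m R = 1%:M + lam *: R.
  by rewrite -(mulmxV uR) mulmxBl mul_scalar_mx subrK.
have hRA : R *m A = A *m R by rewrite hAR -(mulVmx uR) mulmxBr mul_mx_scalar subrK.
have scale_lam (X : 'M[C]_m) : 1%:M + ('i * z) *: X = (- z) *: (lam%:M - 'i *: X).
  rewrite scalerBr scale_scalar_mx /lam mulrNN mulfV // scalerA mulNr scaleNr opprK.
  by rewrite mulrC.
have ew : j *m ctr Q *m invmx S' *m R *m Q = j *m ctr G *m invmx T *m R *m G.
  by rewrite -!mulmxA; move: (resolvent_form_succE hRA); rewrite -!mulmxA => ->.
rewrite ew form_succE !scale_lam -scalemxAl -scalemxAr; congr (_ *: _).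
exact (Cm_intertwine hTiT hRA hAR).
Qed.

End Step.

Lemma jmat_invol (C : numClosedFieldType) m1 m2 :
  jmat C m1 m2 *m jmat C m1 m2 = 1%:M.
Proof.
rewrite /jmat mulmx_block !mulmx0 !mul0mx !mulmx1 !addr0 !add0r mulmxN mulmx1 opprK.
by rewrite -scalar_mx_block.
Qed.

Lemma ctr_jmat (C : numClosedFieldType) m1 m2 : ctr (jmat C m1 m2) = jmat C m1 m2.
Proof.
rewrite /jmat /ctr map_block_mx tr_block_mx map_mxN !map_mx1 !map_mx0 !trmx0.
by rewrite !tr_scalar_mx linearN /= tr_scalar_mx.
Qed.

Unset Implicit Arguments.
Theorem theorem2p5 (C : numClosedFieldType) (m1 m2 n : nat)
  (A S0 : 'M[C]_n) (Pi0 : 'M[C]_(n, m1 + m2)) :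
  (0 < m1)%N -> (0 < m2)%N ->
  admissible (jmat C m1 m2) A S0 Pi0 ->
  (forall k : nat, Sk (jmat C m1 m2) A S0 Pi0 k \in unitmx) /\
  (forall k : nat,
     posdef (Ck (jmat C m1 m2) A S0 Pi0 k) /\
     Ck (jmat C m1 m2) A S0 Pi0 k *m jmat C m1 m2 *m Ck (jmat C m1 m2) A S0 Pi0 k
       = jmat C m1 m2) /\
  (forall (k : nat) (z : C), z != 0 ->
     (A - (- z^-1)%:M) \in unitmx ->
     wA (jmat C m1 m2) A S0 Pi0 0 (- z^-1) \in unitmx ->
     Wk (jmat C m1 m2) A S0 Pi0 z k =
       wA (jmat C m1 m2) A S0 Pi0 k (- z^-1)
       *m (1%:M + ('i * z) *: jmat C m1 m2) ^+ k
       *m invmx (wA (jmat C m1 m2) A S0 Pi0 0 (- z^-1))).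
Proof.
move=> _ _ [hA hS0 hadm0]; set j := jmat C m1 m2.
have hj : j *m j = 1%:M := jmat_invol C m1 m2.
have hjc : ctr j = j := ctr_jmat C m1 m2.
have Sk_adm k : posdef (Sk j A S0 Pi0 k) /\
    A *m Sk j A S0 Pi0 k - Sk j A S0 Pi0 k *m ctr A
    = 'i *: (Pik j A Pi0 k *m j *m ctr (Pik j A Pi0 k)).
  elim: k => [|k [pdS adm]]; first by split.
  by split; [exact: Sk_succ_posdef | exact: Sk_succ_admissible].
split; first by move=> k; exact: posdef_unitmx (Sk_adm k).1.
split; first by move=> k; have [pdS adm] := Sk_adm k; exact: Ck_step_posdef_jCj.
move=> k z z0 uR uw0; elim: k => [|k IH]; first by rewrite expr0 /= mulmx1 mulmxV.
have [pdS adm] := Sk_adm k.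
have exprSmx : (1%:M + ('i * z) *: j) ^+ k.+1
    = (1%:M + ('i * z) *: j) *m (1%:M + ('i * z) *: j) ^+ k := exprS _ k.
rewrite exprSmx /= IH !mulmxA; congr (_ *m _ *m _).
exact: Ck_step_intertwine.
Qed.
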